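(* For every $n\ge 1$, there are at least $((n-1)!)^n/(n!)$ pairwise non-isomorphic port-labeled cliques (complete graphs) of size $n$.
   Context: A port-labeled graph is a finite simple undirected graph without node labels in which, at each node of degree $d$, the incident edges carry distinct port numbers $0,\dots,d-1$. Two port-labeled graphs are isomorphic if there is a bijection of nodes mapping each edge $\{u,v\}$ with port $p$ at $u$ and $q$ at $v$ to an edge with port $p$ at the image of $u$ and $q$ at the image of $v$, and conversely. *)

From mathcomp Require Import all_boot all_order all_fingroup all_algebra.
Set Implicit Arguments. Unset Strict Implicit. Unset Printing Implicit Defensive.

(* A port-labeled graph with node set 'I_n: an adjacency relation and, for
   each node u and neighbour v, the port number of edge {u,v} at u.
   (Values of [pl_port u v] for non-adjacent u v are irrelevant.) *)
Record plgraph (n : nat) := PLGraph {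
  pl_adj : rel 'I_n;
  pl_port : 'I_n -> 'I_n -> nat
}.

Definition pl_deg n (G : plgraph n) (u : 'I_n) : nat :=
  #|[set v | pl_adj G u v]|.

Definition pl_wf n (G : plgraph n) : Prop :=
  [/\ forall u v, pl_adj G u v = pl_adj G v u,
      forall u, ~~ pl_adj G u u,
      forall u v, pl_adj G u v -> pl_port G u v < pl_deg G u
    & forall u v w, pl_adj G u v -> pl_adj G u w ->
        pl_port G u v = pl_port G u w -> v = w].

Definition pl_clique n (G : plgraph n) : Prop :=
  pl_wf G /\ (forall u v, pl_adj G u v = (u != v)).

Definition pl_iso n (G H : plgraph n) : Prop :=
  exists f : {perm 'I_n},
    (forall u v, pl_adj H (f u) (f v) = pl_adj G u v) /\
    (forall u v, pl_adj G u v -> pl_port H (f u) (f v) = pl_port G u v).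

(** Encode a port labeling of the clique on ['I_n] by a family of permutations
    [f u] of ['I_n] fixing [u]: the port of edge [{u,v}] at [u] is [f u v] with
    [u] squeezed out by [unbump].  This gives exactly [((n-1)!)^n] port-labeled
    cliques.  Two of them are isomorphic only via a node permutation, and a
    labeling together with such a permutation determines its image, so every
    isomorphism class has at most [n!] members; hence there are at least
    [((n-1)!)^n / n!] classes, and a transversal of them is the required family. *)

From mathcomp Require Import all_boot all_order all_fingroup all_algebra.
Import Order.TTheory GRing.Theory Num.Theory.

Set Implicit Arguments.
Unset Strict Implicit.
Unset Printing Implicit Defensive.

Section EquivalenceClasses.

Variables (T : finType) (R : rel T) (D : {set T}).
Hypothesis eqiR : {in D & &, equivalence_rel R}.

Local Notation P := (equivalence_partition R D).

Lemma card_le_equivalence_partition k :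
  {in D, forall x, #|[set y in D | R x y]| <= k} -> #|D| <= #|P| * k.
Proof.
move=> le_class_k.
rewrite (card_partition (equivalence_partitionP eqiR)) -sum_nat_const.
by apply: leq_sum => _ /imsetP[x Dx ->]; apply: le_class_k.
Qed.

Lemma transversal_equivalence_partition_eq :
  {in transversal P D &, forall x y, R x y -> x = y}.
Proof.
have partP := equivalence_partitionP eqiR.
have [_ tiP _] := and3P partP; have trX := transversalP partP.
move=> x y Xx Xy Rxy; have /subsetP sXD := transversal_sub trX.
apply: (pblock_inj trX) => //; apply/esym/same_pblock => //.
by rewrite pblock_equivalence_partition ?sXD.
Qed.

End EquivalenceClasses.

Section CliqueLabelings.

Variable n : nat.

Local Notation clique_labeling := {ffun 'I_n -> 'S_n}.

Definition labelings : {set clique_labeling} :=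
  [set f : clique_labeling | [forall u, f u \in perm_on [set~ u]]].

Definition port (f : clique_labeling) (u v : 'I_n) : nat := unbump u (f u v).

Definition clique_of (f : clique_labeling) : plgraph n :=
  PLGraph (fun u v : 'I_n => u != v) (port f).

Implicit Types f g h : clique_labeling.

Lemma labeling_fix f u : f \in labelings -> f u u = u.
Proof.
by rewrite inE => /forallP /(_ u) /out_perm; apply; rewrite !inE eqxx.
Qed.

Lemma labeling_neq f u v : f \in labelings -> u != v -> f u v != u.
Proof.
move=> Lf; apply: contra => /eqP fuv_u.
by apply/eqP/(@perm_inj _ (f u)); rewrite labeling_fix.
Qed.

Lemma port_inj f u v w : f \in labelings -> u != v -> u != w ->
  port f u v = port f u w -> v = w.
Proof.
move=> Lf uv uw /(can_in_inj unbumpK) fuv_fuw; apply: (@perm_inj _ (f u)).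
by apply/val_inj/fuv_fuw; rewrite inE labeling_neq.
Qed.

Lemma port_lt f u v : f \in labelings -> u != v -> port f u v < n.-1.
Proof. by move=> Lf uv; exact: unlift_subproof (exist _ (f u v) (labeling_neq Lf uv)). Qed.

Lemma labeling_eq f g : f \in labelings -> g \in labelings ->
  (forall u v, u != v -> port f u v = port g u v) -> f = g.
Proof.
move=> Lf Lg eq_port; apply/ffunP => u; apply/permP => v.
have [<-|uv] := eqVneq u v; first by rewrite !labeling_fix.
apply/val_inj/(can_in_inj (@unbumpK u)); rewrite ?inE ?labeling_neq //.
exact: eq_port.
Qed.

Lemma card_labelings : #|labelings| = (n.-1)`! ^ n.
Proof.
have -> : #|labelings| = #|[pred f : clique_labeling | f \in family
                                      (fun u => perm_on [set~ u])]|.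
  by apply: eq_card => f; rewrite !inE; apply/forallP/familyP.
have foldE (s : seq 'I_n) :
    foldr muln 1 [seq #|perm_on [set~ u]| | u <- s] = (n.-1)`! ^ size s.
  by elim: s => //= u s ->; rewrite card_perm cardsC1 card_ord expnS.
by rewrite card_family /image_mem foldE size_enum_ord.
Qed.

Lemma clique_of_clique f : f \in labelings -> pl_clique (clique_of f).
Proof.
move=> Lf; split=> //; split=> /=.
- by move=> u v; rewrite eq_sym.
- by move=> u; rewrite eqxx.
- move=> u v uv; suff -> : pl_deg (clique_of f) u = n.-1 by exact: port_lt.
  rewrite /pl_deg -[in RHS](card_ord n) -(cardsC1 u).
  by apply: eq_card => w; rewrite !inE eq_sym.
- by move=> u v w; exact: port_inj.
Qed.

Definition relabels f g (p : 'S_n) :=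
  [forall u, forall v, (u != v) ==> (port g (p u) (p v) == port f u v)].

Definition iso_labeling f g := [exists p, relabels f g p].

Lemma relabelsP f g (p : 'S_n) :
  reflect (forall u v, u != v -> port g (p u) (p v) = port f u v) (relabels f g p).
Proof.
apply: (iffP forallP) => [rel_fg u v uv | rel_fg u].
  by have /forallP /(_ v) /implyP /(_ uv) /eqP := rel_fg u.
by apply/forallP => v; apply/implyP => uv; apply/eqP/rel_fg.
Qed.

Lemma perm_neq (p : 'S_n) u v : u != v -> p u != p v.
Proof. by apply: contra => /eqP /perm_inj ->. Qed.

Lemma relabels_uniq f g h (p : 'S_n) : g \in labelings -> h \in labelings ->
  relabels f g p -> relabels f h p -> g = h.
Proof.
move=> Lg Lh /relabelsP rel_fg /relabelsP rel_fh.
apply: labeling_eq => // u v /(perm_neq (p^-1)%g) uv.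
by have := rel_fg _ _ uv; have := rel_fh _ _ uv; rewrite !permKV => -> ->.
Qed.

Lemma iso_labeling_equivalence : equivalence_rel iso_labeling.
Proof.
have refl f : iso_labeling f f.
  by apply/existsP; exists 1%g; apply/relabelsP => u v _; rewrite !perm1.
have trans f g h : iso_labeling f g -> iso_labeling g h -> iso_labeling f h.
  move=> /existsP[p /relabelsP rel_fg] /existsP[q /relabelsP rel_gh].
  apply/existsP; exists (p * q)%g; apply/relabelsP => u v uv.
  by rewrite !permM rel_gh ?rel_fg ?perm_neq.
have sym f g : iso_labeling f g -> iso_labeling g f.
  move=> /existsP[p /relabelsP rel_fg]; apply/existsP; exists (p^-1)%g.
  by apply/relabelsP => u v /(perm_neq (p^-1)%g) uv; rewrite -rel_fg ?permKV.
move=> f g h; split=> // iso_fg.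
by apply/idP/idP => [/(trans _ _ _ (sym _ _ iso_fg)) | /(trans _ _ _ iso_fg)].
Qed.

Lemma card_iso_class f : #|[set g in labelings | iso_labeling f g]| <= n`!.
Proof.
pose witness g := odflt 1%g [pick p | relabels f g p].
have witnessP g : iso_labeling f g -> relabels f g (witness g).
  by move=> /existsP[p rel_fg]; rewrite /witness; case: pickP => // /(_ p) /negbT /negP.
have witness_inj : {in [set g in labelings | iso_labeling f g] &, injective witness}.
  move=> g h /setIdP[Lg iso_fg] /setIdP[Lh iso_fh] eq_w.
  by apply: (relabels_uniq Lg Lh (witnessP _ iso_fg)); rewrite eq_w witnessP.
by rewrite -(card_in_imset witness_inj) -card_Sn max_card.
Qed.

Lemma iso_clique_of f g : pl_iso (clique_of f) (clique_of g) -> iso_labeling f g.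
Proof. by move=> [p [_ port_p]]; apply/existsP; exists p; apply/relabelsP. Qed.

End CliqueLabelings.

Theorem lemma5p2 (n : nat) (hn : (1 <= n)%N) :
  exists (m : nat) (F : 'I_m -> plgraph n),
    [/\ forall i, pl_clique (F i),
        forall i j, i != j -> ~ pl_iso (F i) (F j)
      & ((((n.-1)`! ^ n)%:R / (n`!)%:R : rat) <= m%:R)%R].
Proof.
have eqiR : {in labelings n & &, equivalence_rel (@iso_labeling n)}.
  by move=> f g h _ _ _; apply: iso_labeling_equivalence.
pose X := transversal (equivalence_partition (@iso_labeling n) (labelings n)) (labelings n).
have trX := transversalP (equivalence_partitionP eqiR).
have /subsetP sXL := transversal_sub trX.
exists #|X|, (fun i => clique_of (enum_val i)); split.
- by move=> i; apply/clique_of_clique/sXL/enum_valP.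
- move=> i j /eqP neq_ij /iso_clique_of iso_ij; apply/neq_ij/enum_val_inj.
  by apply: (transversal_equivalence_partition_eq eqiR) iso_ij; exact: enum_valP.
- rewrite ler_pdivrMr ?ltr0n ?fact_gt0 // -natrM ler_nat.
  rewrite (card_transversal trX) -card_labelings.
  by apply: card_le_equivalence_partition => // f _; apply: card_iso_class.
Qed.
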